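(* Let $\sigma^{11},\sigma^{22}$ be sufficiently smooth functions on $\overline\Omega$ (say in $W^{3,\infty}(\Omega)$) and define, for $0\le i\le n_x-1$, $0\le j\le n_y-1$, $$\tilde\sigma^{kk}_{i+1/2,j+1/2}=\sigma^{kk}_{i+1/2,j+1/2}-\frac{h_{i+1/2}^2}{8}\Big(\frac{\partial^2\sigma^{kk}}{\partial x^2}\Big)_{i+1/2,j+1/2}-\frac{l_{j+1/2}^2}{8}\Big(\frac{\partial^2\sigma^{kk}}{\partial y^2}\Big)_{i+1/2,j+1/2},\quad k=1,2.$$ Then $$\Big(\frac{\partial\sigma^{11}}{\partial x}\Big)_{i,j+1/2}=[D_x\tilde\sigma^{11}]_{i,j+1/2}+\epsilon^x_{i,j+1/2}(\sigma^{11}),\quad 1\le i\le n_x-1,\ 0\le j\le n_y-1,$$ $$\Big(\frac{\partial\sigma^{22}}{\partial y}\Big)_{i+1/2,j}=[D_y\tilde\sigma^{22}]_{i+1/2,j}+\epsilon^y_{i+1/2,j}(\sigma^{22}),\quad 0\le i\le n_x-1,\ 1\le j\le n_y-1,$$ where $|\epsilon^x_{i,j+1/2}(\sigma^{11})|\le C(h^2+l^2)\|\sigma^{11}\|_{3,\infty}$ and $|\epsilon^y_{i+1/2,j}(\sigma^{22})|\le C(h^2+l^2)\|\sigma^{22}\|_{3,\infty}$ with $C$ an absolute constant independent of the grid.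
   Context: Grid on $\Omega=(0,a)\times(0,b)$: $0=x_0<\dots<x_{n_x}=a$, $0=y_0<\dots<y_{n_y}=b$, $x_{i+1/2}=(x_i+x_{i+1})/2$, $h_{i+1/2}=x_{i+1}-x_i$, $h_i=(h_{i-1/2}+h_{i+1/2})/2$, $h=\max_i h_{i+1/2}$; analogously $y_{j+1/2}$, $l_{j+1/2}=y_{j+1}-y_j$, $l_j=(l_{j-1/2}+l_{j+1/2})/2$, $l=\max_j l_{j+1/2}$. For a function $\phi$, $\phi_{\alpha,\beta}=\phi(x_\alpha,y_\beta)$. $[D_x\phi]_{i,m}=(\phi_{i+1/2,m}-\phi_{i-1/2,m})/h_i$, $[D_y\phi]_{k,j}=(\phi_{k,j+1/2}-\phi_{k,j-1/2})/l_j$ for interior indices. $\|\cdot\|_{3,\infty}$ denotes the $W^{3,\infty}(\Omega)$ norm (maximum of sup norms of all partial derivatives of order at most 3). *)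

From Stdlib Require Import Reals Lra List.
From Coquelicot Require Import Coquelicot.
Import ListNotations.
Open Scope R_scope.

Definition dx (g : R -> R -> R) : R -> R -> R := fun u v => Derive (fun t => g t v) u.
Definition dy (g : R -> R -> R) : R -> R -> R := fun u v => Derive (fun t => g u t) v.

(* iterated partial derivative along a list of directions (true = x, false = y);
   the head of the list is the last derivative applied *)
Fixpoint pd (d : list bool) (g : R -> R -> R) : R -> R -> R :=
  match d with
  | nil => g
  | true :: d' => dx (pd d' g)
  | false :: d' => dy (pd d' g)
  end.

Definition inOmega (a b u v : R) : Prop := 0 < u < a /\ 0 < v < b.

Definition C3_on (a b : R) (g : R -> R -> R) : Prop :=
  (forall d, (length d <= 2)%nat -> forall u v, inOmega a b u v ->
     ex_derive (fun t => pd d g t v) u /\ ex_derive (fun t => pd d g u t) v) /\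
  (forall d, (length d <= 3)%nat -> forall u v, inOmega a b u v ->
     continuity_2d_pt (pd d g) u v).

(* M bounds the W^{3,infty}(Omega) norm: every partial derivative of order <= 3
   is bounded by M in absolute value on Omega *)
Definition norm3_le (a b : R) (g : R -> R -> R) (M : R) : Prop :=
  forall d, (length d <= 3)%nat -> forall u v, inOmega a b u v -> Rabs (pd d g u v) <= M.

Definition is_grid (x : nat -> R) (n : nat) (a : R) : Prop :=
  x 0%nat = 0 /\ x n = a /\ forall k, (k < n)%nat -> x k < x (S k).

Definition mid (x : nat -> R) (i : nat) : R := (x i + x (S i)) / 2.
Definition hh (x : nat -> R) (i : nat) : R := x (S i) - x i.
(* h_i = (h_{i-1/2} + h_{i+1/2})/2, for i >= 1 *)
Definition hn (x : nat -> R) (i : nat) : R := (hh x (pred i) + hh x i) / 2.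
Definition hmax (x : nat -> R) (n : nat) : R :=
  fold_right Rmax 0 (map (hh x) (seq 0 n)).

Definition sigt (x y : nat -> R) (g : R -> R -> R) (i j : nat) : R :=
  g (mid x i) (mid y j)
  - (hh x i) ^ 2 / 8 * pd [true; true] g (mid x i) (mid y j)
  - (hh y j) ^ 2 / 8 * pd [false; false] g (mid x i) (mid y j).

Definition Dx_sigt (x y : nat -> R) (g : R -> R -> R) (i j : nat) : R :=
  (sigt x y g i j - sigt x y g (pred i) j) / hn x i.
Definition Dy_sigt (x y : nat -> R) (g : R -> R -> R) (i j : nat) : R :=
  (sigt x y g i j - sigt x y g i (pred j)) / hn y j.

From Stdlib Require Import Reals List Lra Lia.
From Coquelicot Require Import Coquelicot.
Import ListNotations.
Open Scope R_scope.

(* Fix a node x_i and let d = h_{i-1/2}/2, e = h_{i+1/2}/2 be its distances to the neighbouring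
   midpoints. Along the line y = y_{j+1/2}, Taylor expansion about x_i shows that subtracting
   (h^2/8) sigma_xx at a midpoint removes the second-order term exactly: the corrected value at
   x_i + e is sigma + e sigma_x + e^3 r with |r| <= 2/3 |sigma_xxx|, and likewise at x_i - d.
   The divided difference over d + e therefore misses sigma_x(x_i) by (e^3 r2 - d^3 r1)/(d + e),
   which is at most max(d, e)^2 times that bound since e^3 + d^3 = (d + e)(d^2 - d e + e^2).
   The correction (l^2/8) sigma_yy only adds a divided difference in x, bounded by |sigma_xyy|
   through the mean value theorem. Hence C = 1 works; the estimate in y is the estimate in x
   for the transposed function. *)

Lemma mean_value_Derive (F : R -> R) (x y : R) :
  x < y -> (forall t, x <= t <= y -> ex_derive F t) ->
  exists z, x < z < y /\ F y = F x + (y - x) * Derive F z.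
Proof.
  intros Hxy HF.
  destruct (Taylor_Lagrange F 0 x y Hxy) as [z [Hz ->]].
  - intros t Ht [|[|k]] Hk; [exact I | exact (HF t Ht) | lia].
  - exists z; split; [exact Hz|]. change (Derive_n F 1 z) with (Derive F z). simpl. field.
Qed.

Lemma Rabs_diff_le_of_Derive (F : R -> R) (M x y : R) :
  x < y -> (forall t, x <= t <= y -> ex_derive F t) ->
  (forall t, x <= t <= y -> Rabs (Derive F t) <= M) ->
  Rabs (F y - F x) <= M * (y - x).
Proof.
  intros Hxy HF HM.
  destruct (mean_value_Derive F x y Hxy HF) as [z [Hz ->]].
  replace (F x + (y - x) * Derive F z - F x) with (Derive F z * (y - x)) by ring.
  rewrite Rabs_mult, (Rabs_right (y - x)) by lra.
  apply Rmult_le_compat_r; [lra | apply HM; lra].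
Qed.

Section Taylor3.

Variables (f : R -> R) (x y : R).
Hypothesis Hxy : x < y.
Hypothesis Hder : forall t, x <= t <= y -> forall k, (k <= 3)%nat -> ex_derive_n f k t.

Lemma taylor_order2 : exists z, x < z < y /\
  f y = f x + (y - x) * Derive_n f 1 x + (y - x) ^ 2 / 2 * Derive_n f 2 x
        + (y - x) ^ 3 / 6 * Derive_n f 3 z.
Proof.
  destruct (Taylor_Lagrange f 2 x y Hxy Hder) as [z [Hz ->]].
  exists z; split; [exact Hz|]. simpl. field.
Qed.

Lemma taylor_order1_Derive : exists z, x < z < y /\
  Derive_n f 1 y = Derive_n f 1 x + (y - x) * Derive_n f 2 x
                   + (y - x) ^ 2 / 2 * Derive_n f 3 z.
Proof.
  destruct (Taylor_Lagrange (Derive f) 1 x y Hxy) as [z [Hz E]].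
  - intros t Ht [|[|[|k]]] Hk; [exact I | exact (Hder t Ht 2 ltac:(lia))
                               | exact (Hder t Ht 3 ltac:(lia)) | lia].
  - exists z; split; [exact Hz|].
    change (Derive_n f 1 y) with (Derive f y). rewrite E.
    cbn -[Derive_n].
    change (Derive_n (Derive f) 0 x) with (Derive_n f 1 x).
    change (Derive_n (Derive f) 1 x) with (Derive_n f 2 x).
    change (Derive_n (Derive f) 2 z) with (Derive_n f 3 z).
    field.
Qed.

Lemma taylor_order0_Derive2 : exists z, x < z < y /\
  Derive_n f 2 y = Derive_n f 2 x + (y - x) * Derive_n f 3 z.
Proof.
  apply mean_value_Derive; [exact Hxy|].
  intros t Ht. exact (Hder t Ht 3 ltac:(lia)).
Qed.

End Taylor3.

Section CorrectedExpansion.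

Variables (f : R -> R) (M p : R).

Lemma corrected_expansion_right (e : R) : 0 < e ->
  (forall t, p <= t <= p + e -> forall k, (k <= 3)%nat -> ex_derive_n f k t) ->
  (forall t, p <= t <= p + e -> Rabs (Derive_n f 3 t) <= M) ->
  exists r, Rabs r <= 2 * M / 3 /\
    f (p + e) - e ^ 2 / 2 * Derive_n f 2 (p + e) = f p + e * Derive_n f 1 p + e ^ 3 * r.
Proof.
  intros He Hder HM.
  destruct (taylor_order2 f p (p + e)) as [z1 [Hz1 Ef]]; [lra | exact Hder |].
  destruct (taylor_order0_Derive2 f p (p + e)) as [z2 [Hz2 Ef2]]; [lra | exact Hder |].
  exists (Derive_n f 3 z1 / 6 - Derive_n f 3 z2 / 2); split.
  - pose proof (HM z1 ltac:(lra)) as B1. pose proof (HM z2 ltac:(lra)) as B2.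
    apply Rabs_le_between in B1, B2. apply Rabs_le_between. lra.
  - rewrite Ef, Ef2. replace (p + e - p) with e by ring. field.
Qed.

Lemma corrected_expansion_left (d : R) : 0 < d ->
  (forall t, p - d <= t <= p -> forall k, (k <= 3)%nat -> ex_derive_n f k t) ->
  (forall t, p - d <= t <= p -> Rabs (Derive_n f 3 t) <= M) ->
  exists r, Rabs r <= 2 * M / 3 /\
    f (p - d) - d ^ 2 / 2 * Derive_n f 2 (p - d) = f p - d * Derive_n f 1 p + d ^ 3 * r.
Proof.
  intros Hd Hder HM.
  destruct (taylor_order2 f (p - d) p) as [z1 [Hz1 Ef]]; [lra | exact Hder |].
  destruct (taylor_order1_Derive f (p - d) p) as [z2 [Hz2 Ef1]]; [lra | exact Hder |].
  exists (Derive_n f 3 z2 / 2 - Derive_n f 3 z1 / 6); split.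
  - pose proof (HM z1 ltac:(lra)) as B1. pose proof (HM z2 ltac:(lra)) as B2.
    apply Rabs_le_between in B1, B2. apply Rabs_le_between. lra.
  - rewrite Ef, Ef1. replace (p - (p - d)) with d by ring. field.
Qed.

End CorrectedExpansion.

Lemma cubic_remainder_quotient_le (d e k r1 r2 K : R) :
  0 < d -> 0 < e -> d <= k -> e <= k -> Rabs r1 <= K -> Rabs r2 <= K ->
  Rabs ((e ^ 3 * r2 - d ^ 3 * r1) / (d + e)) <= k ^ 2 * K.
Proof.
  intros Hd He Hdk Hek Hr1 Hr2.
  assert (HK : 0 <= K) by (pose proof (Rabs_pos r1); lra).
  assert (Hnum : Rabs (e ^ 3 * r2 - d ^ 3 * r1) <= (e ^ 3 + d ^ 3) * K).
  { eapply Rle_trans; [apply Rabs_triang|].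
    assert (0 < e ^ 3) by (apply pow_lt; lra). assert (0 < d ^ 3) by (apply pow_lt; lra).
    rewrite Rabs_Ropp, !Rabs_mult, (Rabs_pos_eq (e ^ 3)), (Rabs_pos_eq (d ^ 3)) by lra.
    nra. }
  assert (Hsq : d ^ 2 - d * e + e ^ 2 <= k ^ 2) by nra.
  rewrite Rabs_div, (Rabs_pos_eq (d + e)) by lra.
  apply Rle_div_l; [lra|].
  eapply Rle_trans; [exact Hnum|].
  replace ((e ^ 3 + d ^ 3) * K) with ((d ^ 2 - d * e + e ^ 2) * K * (d + e)) by ring.
  apply Rmult_le_compat_r; [lra|]. apply Rmult_le_compat_r; lra.
Qed.

Definition corrected_value (f F : R -> R) (hq L q : R) : R :=
  f q - hq ^ 2 / 8 * Derive_n f 2 q - L ^ 2 / 8 * F q.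

Lemma corrected_quotient_error (f F : R -> R) (M p h1 h2 h L Lm : R) :
  0 < h1 -> 0 < h2 -> h1 <= h -> h2 <= h -> 0 <= L <= Lm ->
  (forall t, p - h1 / 2 <= t <= p + h2 / 2 -> forall k, (k <= 3)%nat -> ex_derive_n f k t) ->
  (forall t, p - h1 / 2 <= t <= p + h2 / 2 -> Rabs (Derive_n f 3 t) <= M) ->
  (forall t, p - h1 / 2 <= t <= p + h2 / 2 -> ex_derive F t) ->
  (forall t, p - h1 / 2 <= t <= p + h2 / 2 -> Rabs (Derive F t) <= M) ->
  Rabs (Derive_n f 1 p
        - (corrected_value f F h2 L (p + h2 / 2) - corrected_value f F h1 L (p - h1 / 2))
          / ((h1 + h2) / 2))
  <= (h ^ 2 + Lm ^ 2) * M.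
Proof.
  intros Hh1 Hh2 Hh1h Hh2h HL Hder Hf3 HF HF'.
  set (d := h1 / 2) in *. set (e := h2 / 2) in *.
  assert (Hd : 0 < d) by (unfold d; lra). assert (He : 0 < e) by (unfold e; lra).
  destruct (corrected_expansion_right f M p e) as [r2 [Hr2 E2]];
    [lra | intros t Ht; apply Hder; lra | intros t Ht; apply Hf3; lra |].
  destruct (corrected_expansion_left f M p d) as [r1 [Hr1 E1]];
    [lra | intros t Ht; apply Hder; lra | intros t Ht; apply Hf3; lra |].
  assert (Hsplit :
    Derive_n f 1 p - (corrected_value f F h2 L (p + e) - corrected_value f F h1 L (p - d))
                     / ((h1 + h2) / 2)
    = - ((e ^ 3 * r2 - d ^ 3 * r1) / (d + e)) + L ^ 2 / 8 * ((F (p + e) - F (p - d)) / (d + e))).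
  { unfold corrected_value.
    replace (h2 ^ 2 / 8) with (e ^ 2 / 2) by (unfold e; field).
    replace (h1 ^ 2 / 8) with (d ^ 2 / 2) by (unfold d; field).
    replace ((h1 + h2) / 2) with (d + e) by (unfold d, e; field).
    rewrite E2, E1. field. lra. }
  assert (Hcubic : Rabs ((e ^ 3 * r2 - d ^ 3 * r1) / (d + e)) <= (h / 2) ^ 2 * (2 * M / 3))
    by (apply cubic_remainder_quotient_le; try assumption; unfold d, e; lra).
  assert (HFdiff : Rabs ((F (p + e) - F (p - d)) / (d + e)) <= M).
  { rewrite Rabs_div, (Rabs_pos_eq (d + e)) by lra.
    apply Rle_div_l; [lra|].
    replace (d + e) with (p + e - (p - d)) by ring.
    apply Rabs_diff_le_of_Derive; [lra | exact HF | exact HF']. }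
  assert (HM : 0 <= M) by (pose proof (Rabs_pos (Derive_n f 3 p)); pose proof (Hf3 p); lra).
  rewrite Hsplit.
  eapply Rle_trans; [apply Rabs_triang|].
  rewrite Rabs_Ropp, Rabs_mult, (Rabs_pos_eq (L ^ 2 / 8)) by (pose proof (pow2_ge_0 L); lra).
  assert (HL2 : L ^ 2 <= Lm ^ 2) by (apply pow_incr; lra).
  nra.
Qed.

Section Grid.

Variables (x : nat -> R) (n : nat) (a : R).
Hypothesis Hgrid : is_grid x n a.

Lemma grid_le (k m : nat) : (k <= m <= n)%nat -> x k <= x m.
Proof.
  destruct Hgrid as [_ [_ Hinc]]. induction m as [|m IH]; intros Hkm.
  - replace k with 0%nat by lia. lra.
  - destruct (Nat.eq_dec k (S m)) as [->|Hk]; [lra|].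
    specialize (IH ltac:(lia)). specialize (Hinc m ltac:(lia)). lra.
Qed.

Lemma hh_gt0 (i : nat) : (i < n)%nat -> 0 < hh x i.
Proof. destruct Hgrid as [_ [_ Hinc]]. intros Hi. specialize (Hinc i Hi). unfold hh. lra. Qed.

Lemma mid_in_interval (i : nat) : (i < n)%nat -> 0 < mid x i < a.
Proof.
  intros Hi. destruct Hgrid as [H0 [Hn _]].
  pose proof (hh_gt0 i Hi). pose proof (grid_le 0 i ltac:(lia)). pose proof (grid_le (S i) n ltac:(lia)).
  unfold mid, hh in *. lra.
Qed.

End Grid.

Lemma fold_right_Rmax_ge (l : list R) (z : R) : In z l -> z <= fold_right Rmax 0 l.
Proof.
  induction l as [|w l IH]; simpl; [tauto|]. intros [->|Hz].
  - apply Rmax_l.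
  - eapply Rle_trans; [apply IH, Hz | apply Rmax_r].
Qed.

Lemma hh_le_hmax (x : nat -> R) (n i : nat) : (i < n)%nat -> hh x i <= hmax x n.
Proof. intros Hi. apply fold_right_Rmax_ge, in_map, in_seq. lia. Qed.

Lemma C3_on_ex_derive_n_x (a b : R) (g : R -> R -> R) (u v : R) :
  C3_on a b g -> inOmega a b u v ->
  forall k, (k <= 3)%nat -> ex_derive_n (fun t => g t v) k u.
Proof.
  intros [Hder _] Huv [|[|[|[|k]]]] Hk; try lia; [exact I | ..].
  - exact (proj1 (Hder [] ltac:(simpl; lia) u v Huv)).
  - exact (proj1 (Hder [true] ltac:(simpl; lia) u v Huv)).
  - exact (proj1 (Hder [true; true] ltac:(simpl; lia) u v Huv)).
Qed.

Lemma Dx_sigt_error (a b : R) (nx ny : nat) (x y : nat -> R) (g : R -> R -> R) (M : R) :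
  is_grid x nx a -> is_grid y ny b -> C3_on a b g -> norm3_le a b g M ->
  forall i j, (1 <= i < nx)%nat -> (j < ny)%nat ->
  Rabs (pd [true] g (x i) (mid y j) - Dx_sigt x y g i j)
    <= (hmax x nx ^ 2 + hmax y ny ^ 2) * M.
Proof.
  intros Gx Gy Hg HM i j Hi Hj.
  set (v := mid y j).
  assert (Hleft : mid x (pred i) = x i - hh x (pred i) / 2)
    by (unfold mid, hh; rewrite Nat.succ_pred_pos by lia; field).
  assert (Hright : mid x i = x i + hh x i / 2) by (unfold mid, hh; field).
  assert (Hline : forall t, x i - hh x (pred i) / 2 <= t <= x i + hh x i / 2 -> inOmega a b t v).
  { pose proof (mid_in_interval x nx a Gx (pred i) ltac:(lia)) as Hl.
    pose proof (mid_in_interval x nx a Gx i ltac:(lia)) as Hr.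
    assert (0 < v < b) by exact (mid_in_interval y ny b Gy j Hj).
    rewrite Hleft in Hl. rewrite Hright in Hr.
    intros t Ht. split; lra. }
  unfold Dx_sigt, hn.
  change (sigt x y g ?k j) with
    (corrected_value (fun t => g t v) (fun t => pd [false; false] g t v) (hh x k) (hh y j) (mid x k)).
  change (pd [true] g (x i) v) with (Derive_n (fun t => g t v) 1 (x i)).
  rewrite Hleft, Hright.
  apply corrected_quotient_error.
  - apply (hh_gt0 x nx a Gx). lia.
  - apply (hh_gt0 x nx a Gx). lia.
  - apply hh_le_hmax. lia.
  - apply hh_le_hmax. lia.
  - split; [apply Rlt_le, (hh_gt0 y ny b Gy), Hj | apply hh_le_hmax, Hj].
  - intros t Ht. exact (C3_on_ex_derive_n_x a b g t v Hg (Hline t Ht)).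
  - intros t Ht. exact (HM [true; true; true] ltac:(simpl; lia) t v (Hline t Ht)).
  - intros t Ht. exact (proj1 (proj1 Hg [false; false] ltac:(simpl; lia) t v (Hline t Ht))).
  - intros t Ht. exact (HM [true; false; false] ltac:(simpl; lia) t v (Hline t Ht)).
Qed.

Definition swap_args (g : R -> R -> R) : R -> R -> R := fun u v => g v u.

Lemma pd_swap_args (d : list bool) (g : R -> R -> R) (u v : R) :
  pd d (swap_args g) u v = pd (map negb d) g v u.
Proof.
  induction d as [|[] d IH] in u, v |- *; [reflexivity | ..];
    apply Derive_ext; intros t; apply IH.
Qed.

Lemma inOmega_swap (a b u v : R) : inOmega a b u v -> inOmega b a v u.
Proof. intros [Hu Hv]. split; assumption. Qed.

Lemma C3_on_swap_args (a b : R) (g : R -> R -> R) : C3_on a b g -> C3_on b a (swap_args g).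
Proof.
  intros [Hder Hcont]. split.
  - intros d Hd u v Huv.
    destruct (Hder (map negb d) ltac:(rewrite length_map; exact Hd) v u (inOmega_swap _ _ _ _ Huv))
      as [Hdx Hdy].
    split; eapply ex_derive_ext; try eassumption; intros t; symmetry; apply pd_swap_args.
  - intros d Hd u v Huv eps.
    destruct (Hcont (map negb d) ltac:(rewrite length_map; exact Hd) v u (inOmega_swap _ _ _ _ Huv) eps)
      as [delta Hdelta].
    exists delta. intros u' v' Hu Hv. rewrite !pd_swap_args. apply Hdelta; assumption.
Qed.

Lemma norm3_le_swap_args (a b : R) (g : R -> R -> R) (M : R) :
  norm3_le a b g M -> norm3_le b a (swap_args g) M.
Proof.
  intros HM d Hd u v Huv. rewrite pd_swap_args.
  apply HM; [rewrite length_map; exact Hd | apply inOmega_swap, Huv].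
Qed.

Lemma sigt_swap_args (x y : nat -> R) (g : R -> R -> R) (i j : nat) :
  sigt y x (swap_args g) j i = sigt x y g i j.
Proof. unfold sigt. rewrite !pd_swap_args. cbn [map negb]. unfold swap_args. ring. Qed.

Lemma Dy_sigt_swap_args (x y : nat -> R) (g : R -> R -> R) (i j : nat) :
  Dy_sigt x y g i j = Dx_sigt y x (swap_args g) j i.
Proof. unfold Dy_sigt, Dx_sigt. rewrite !sigt_swap_args. reflexivity. Qed.

Theorem lemma4p1 :
  exists C : R,
  forall (a b : R) (nx ny : nat) (x y : nat -> R),
  is_grid x nx a -> is_grid y ny b ->
  forall (s11 s22 : R -> R -> R) (M11 M22 : R),
  C3_on a b s11 -> norm3_le a b s11 M11 ->
  C3_on a b s22 -> norm3_le a b s22 M22 ->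
  (forall i j, (1 <= i < nx)%nat -> (j < ny)%nat ->
     Rabs (pd [true] s11 (x i) (mid y j) - Dx_sigt x y s11 i j)
       <= C * (hmax x nx ^ 2 + hmax y ny ^ 2) * M11) /\
  (forall i j, (i < nx)%nat -> (1 <= j < ny)%nat ->
     Rabs (pd [false] s22 (mid x i) (y j) - Dy_sigt x y s22 i j)
       <= C * (hmax x nx ^ 2 + hmax y ny ^ 2) * M22).
Proof.
  exists 1. intros a b nx ny x y Gx Gy s11 s22 M11 M22 C11 N11 C22 N22.
  split; intros i j Hi Hj; rewrite Rmult_1_l.
  - exact (Dx_sigt_error a b nx ny x y s11 M11 Gx Gy C11 N11 i j Hi Hj).
  - rewrite Dy_sigt_swap_args, Rplus_comm.
    replace (pd [false] s22 (mid x i) (y j)) with (pd [true] (swap_args s22) (y j) (mid x i))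
      by apply pd_swap_args.
    apply (Dx_sigt_error b a ny nx y x); auto using C3_on_swap_args, norm3_le_swap_args.
Qed.
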